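(* With notation as in the context, the maps \[\mathbb{F}\colon\mathcal{T}\to\mathcal{E}nd_\Gamma(\mathrm{P}),\quad (x,y)\mapsto x_0,\qquad \mathbb{G}\colon\mathcal{E}nd_\Gamma(\mathrm{P})\to\mathcal{T},\quad g\mapsto\big(\overline{g},\,(-1)^{|g|}\Delta(g)\circ\tau\big)\] are well-defined morphisms of DG $\mathbb{Z}$-modules (complexes) which induce mutually inverse bijections on cohomology. Moreover, $\mathbb{G}$ is a morphism of DG-algebras (so $\mathbb{G}$ is a quasi-isomorphism of DG-algebras).
   Context: $k$ is a field, $\Gamma$ a $k$-algebra (right modules), $M$ a $\Gamma$-module, $n\ge1$. Given: a complex of finitely generated projectives $\mathrm{P}=(0\to P_{n-1}\xrightarrow{d_{n-1}}\cdots\xrightarrow{d_1}P_0\to0)$, $P_i$ in degree $-i$, and $\alpha\colon P_0\to M$, $\beta\colon M\to P_{n-1}$ with $0\to M\xrightarrow{\beta}P_{n-1}\to\cdots\to P_0\xrightarrow{\alpha}M\to0$ exact; $d_0=\beta\circ\alpha$. $\mathcal{P}$ is the complex with a copy of $P_i$ (the $\ell$-th copy) in degree $-(\ell n+i)$ for $\ell\ge0$, $0\le i\le n-1$, differential $(-1)^{\ell n}d_i$ from the $\ell$-th copy of $P_i$ to the $\ell$-th copy of $P_{i-1}$ ($i\geq1$) and $(-1)^{\ell n}d_0$ from the $(\ell+1)$-th copy of $P_0$ to the $\ell$-th copy of $P_{n-1}$. $\iota\colon\mathrm{P}\to\mathcal{P}$ is the inclusion of the $0$-th copy. $\mathcal{E}=\mathcal{E}nd_\Gamma(\mathcal{P})$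 and $\mathcal{E}nd_\Gamma(\mathrm{P})$ are DG endomorphism algebras (degree $i$: collections of maps raising degree by $i$; product: composition; differential $\delta(f)=d\circ f-(-1)^{|f|}f\circ d$). $\sigma\in\mathcal{E}^n$ is the identity from the $\ell$-th copy of $P_i$ to the $(\ell-1)$-th copy ($\ell\ge1$), zero on the $0$-th copy; $\tau\in\mathcal{E}^{-n}$ is the identity from the $\ell$-th copy of $P_i$ to the $(\ell+1)$-th copy, for all $\ell\geq 0$. ${}^{\sigma}\mathcal{E}^i=\{x\in\mathcal{E}^i:\sigma\circ x=(-1)^{n|x|}x\circ\sigma\}$, ${}^{-\sigma}\mathcal{E}^i=\{y\in\mathcal{E}^i:\sigma\circ y=(-1)^{n(|y|+1)}y\circ\sigma\}$. $\mathcal{T}$ is the DG-algebra with degree $j$ part $\{(x,y):x\in{}^{\sigma}\mathcal{E}^j,\ y\in{}^{-\sigma}\mathcal{E}^{j-n+1}\}$, product $(x,y)\cdot(a,b)=(x\circ a,\ x\circ b+(-1)^{|a|(n+1)}y\circ a)$ and differential $\xi(x,y)=(\delta(x)-(-1)^{|x|}y\circ\sigma,\ \delta(y))$. For $x\in\mathcal{E}$, $x\circ\iota$ is the restriction of $x$ to the $0$-th copy; when $x\in{}^{\sigma}\mathcal{E}$ this restriction has the form $\iota\circ x_0$ for a unique $x_0\in\mathcal{E}nd_\Gamma(\mathrm{P})$ (this is the meaning of $x_0$ above). For homogeneous $g\in\mathcal{E}nd_\Gamma(\mathrm{P})$, the graded repetition $\overline{g}\in\mathcal{E}$ is the element acting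 on the $\ell$-th copy of $\mathrm{P}$ as $(-1)^{\ell n|g|}g$ into the $\ell$-th copy, for every $\ell\ge0$; and $\Delta(g)=\delta(\overline{g})-\overline{\delta(g)}$. *)

From HB Require Import structures.
From mathcomp Require Import all_boot all_order all_algebra.
Set Implicit Arguments. Unset Strict Implicit. Unset Printing Implicit Defensive.
Import Order.TTheory GRing.Theory Num.Theory.
Local Open Scope ring_scope.

(* Right Gamma-modules are left modules over the converse ring Gamma^c. *)

Section Modules.
Variable R : pzRingType.

Definition fingen (V : lmodType R) : Prop :=
  exists (m : nat) (g : 'I_m -> V),
    forall v : V, exists c : 'I_m -> R, v = \sum_(t < m) c t *: g t.

Definition projective (V : lmodType R) : Prop :=
  forall (A B : lmodType R) (p : A -> B) (f : V -> B),
    linear p -> linear f -> (forall b, exists a, p a = b) ->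
    exists h : V -> A, linear h /\ forall v, p (h v) = f v.

Definition fg_projective (V : lmodType R) : Prop := fingen V /\ projective V.
End Modules.

Section Complexes.
Variable R : pzRingType.
Variable n : nat.
Variable P : nat -> lmodType R.   (* P i for i < n are the terms of the complex P *)

Definition castP (i i' : nat) (x : P i) : P i' :=
  match i =P i' with
  | ReflectT e => eq_rect i P x i' e
  | ReflectF _ => 0
  end.

Definition sgnZ (j : int) : R := (-1) ^+ `|j|%N.

(* ---------- graded endomorphisms of P (the complex 0 -> P_{n-1} -> ... -> P_0 -> 0),
   P_i in degree -i. *)
Definition FamP := forall i i' : nat, P i -> P i'.

Definition inP (j : int) (g : FamP) : Prop :=
  (forall i i', linear (g i i')) /\
  (forall i i' (v : P i),
      ~~ [&& (i < n)%N, (i' < n)%N & (i'%:Z + j == i%:Z)] -> g i i' v = 0).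

Definition eqP' (f g : FamP) : Prop := forall i i' v, f i i' v = g i i' v.
Definition addP (f g : FamP) : FamP := fun i i' v => f i i' v + g i i' v.
Definition scaleP (s : R) (f : FamP) : FamP := fun i i' v => s *: f i i' v.
Definition zeroP : FamP := fun i i' v => 0.
Definition idFamP : FamP :=
  fun i i' v => if (i == i') && (i < n)%N then castP i' v else 0.

Definition compP (jg : int) (f g : FamP) : FamP := fun i i2 x =>
  match i%:Z - jg with
  | Posz m => f m i2 (g i m x)
  | Negz _ => 0
  end.

(* The l-th copy of P_i (i < n) sits in degree -(l n + i); an element is a
   family f l i l' i' : (l-th copy of P_i) -> (l'-th copy of P_i'). *)
Definition idx (l i : nat) : nat := (l * n + i)%N.

Definition FamE := forall l i l' i' : nat, P i -> P i'.

Definition inE (j : int) (f : FamE) : Prop :=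
  (forall l i l' i', linear (f l i l' i')) /\
  (forall l i l' i' (v : P i),
      ~~ [&& (i < n)%N, (i' < n)%N & ((idx l' i')%:Z + j == (idx l i)%:Z)] ->
      f l i l' i' v = 0).

Definition eqE (f g : FamE) : Prop :=
  forall l i l' i' v, f l i l' i' v = g l i l' i' v.
Definition addE (f g : FamE) : FamE :=
  fun l i l' i' v => f l i l' i' v + g l i l' i' v.
Definition scaleE (s : R) (f : FamE) : FamE := fun l i l' i' v => s *: f l i l' i' v.
Definition zeroE : FamE := fun l i l' i' v => 0.
Definition idE : FamE :=
  fun l i l' i' v => if [&& l == l', i == i' & (i < n)%N] then castP i' v else 0.

(* composition f o g, where jg is the degree of g: the (unique) intermediate
   component is the one in degree -(idx l i) + jg *)
Definition compE (jg : int) (f g : FamE) : FamE := fun l i l2 i2 x =>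
  match (idx l i)%:Z - jg with
  | Posz m => f (m %/ n)%N (m %% n)%N l2 i2 (g l i (m %/ n)%N (m %% n)%N x)
  | Negz _ => 0
  end.

Definition sigma : FamE :=
  fun l i l' i' v => if [&& l == l'.+1, i == i' & (i < n)%N] then castP i' v else 0.
Definition tau : FamE :=
  fun l i l' i' v => if [&& l' == l.+1, i == i' & (i < n)%N] then castP i' v else 0.

Definition sigE (j : int) (x : FamE) : Prop :=
  inE j x /\ eqE (compE j sigma x) (scaleE (sgnZ (n%:Z * j)) (compE n%:Z x sigma)).
Definition msigE (j : int) (y : FamE) : Prop :=
  inE j y /\
  eqE (compE j sigma y) (scaleE (sgnZ (n%:Z * (j + 1))) (compE n%:Z y sigma)).

Definition FamT := (FamE * FamE)%type.
Definition inT (j : int) (t : FamT) : Prop := sigE j t.1 /\ msigE (j - n%:Z + 1) t.2.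
Definition eqT (t s : FamT) : Prop := eqE t.1 s.1 /\ eqE t.2 s.2.
Definition addT (t s : FamT) : FamT := (addE t.1 s.1, addE t.2 s.2).
Definition subT (t s : FamT) : FamT :=
  (addE t.1 (scaleE (-1) s.1), addE t.2 (scaleE (-1) s.2)).
Definition zeroT : FamT := (zeroE, zeroE).
Definition oneT : FamT := (idE, zeroE).
Definition mulT (ja : int) (t s : FamT) : FamT :=
  (compE ja t.1 s.1,
   addE (compE (ja - n%:Z + 1) t.1 s.2) (scaleE (sgnZ (ja * (n%:Z + 1))) (compE ja t.2 s.1))).

Variable M : lmodType R.
Variable d : forall i : nat, P i -> P i.-1.
Variable alpha : P 0 -> M.
Variable beta : M -> P n.-1.

Definition dP : FamP := fun i i' v =>
  if [&& (0 < i)%N, (i < n)%N & i' == i.-1] then castP i' (d v) else 0.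

Definition dQ : FamE := fun l i l' i' v =>
  if [&& (0 < i)%N, (i < n)%N, l' == l & i' == i.-1] then
    sgnZ (l * n)%N%:Z *: castP i' (d v)
  else if [&& i == 0, l == l'.+1 & i' == n.-1] then
    sgnZ (l' * n)%N%:Z *: castP i' (beta (alpha (castP 0 v)))
  else 0.

Definition deltaP (j : int) (g : FamP) : FamP :=
  addP (compP j dP g) (scaleP (- sgnZ j) (compP 1 g dP)).
Definition deltaE (j : int) (f : FamE) : FamE :=
  addE (compE j dQ f) (scaleE (- sgnZ j) (compE 1 f dQ)).

Definition xiT (j : int) (t : FamT) : FamT :=
  (addE (deltaE j t.1) (scaleE (- sgnZ j) (compE n%:Z t.2 sigma)),
   deltaE (j - n%:Z + 1) t.2).

Definition bar (j : int) (g : FamP) : FamE := fun l i l' i' v =>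
  if l == l' then sgnZ ((l * n)%N%:Z * j) *: g i i' v else 0.
Definition Delta (j : int) (g : FamP) : FamE :=
  addE (deltaE j (bar j g)) (scaleE (-1) (bar (j + 1) (deltaP j g))).

Definition FF (t : FamT) : FamP := fun i i' v => t.1 0%N i 0%N i' v.
Definition GG (j : int) (g : FamP) : FamT :=
  (bar j g, scaleE (sgnZ j) (compE (- n%:Z) (Delta j g) tau)).

(* exactness of 0 -> M -beta-> P_{n-1} -> ... -> P_0 -alpha-> M -> 0 *)
Definition exact_resolution : Prop :=
  injective beta /\
  (forall m : M, exists x : P 0, alpha x = m) /\
  (forall i, (0 < i)%N -> (i.+1 < n)%N ->
     forall x : P i, d x = 0 <-> exists y : P i.+1, d y = x) /\
  ((1 < n)%N -> forall x : P n.-1, d x = 0 <-> exists m : M, beta m = x) /\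
  ((1 < n)%N -> forall x : P 0, alpha x = 0 <-> exists y : P 1, d y = x) /\
  (n = 1%N -> forall x : P 0, alpha x = 0 <-> exists m : M, castP 0 (beta m) = x).

End Complexes.

Arguments castP {R P} i i' x.
Arguments FamP {R} P.
Arguments FamE {R} P.
Arguments FamT {R} P.
Arguments inP {R} n {P} j g.
Arguments inE {R} n {P} j f.
Arguments inT {R} n {P} j t.
Arguments eqP' {R P} f g.
Arguments addP {R P} f g.
Arguments scaleP {R P} s f.
Arguments zeroP {R} P.
Arguments idFamP {R} n P.
Arguments compP {R P} jg f g.
Arguments eqE {R P} f g.
Arguments addE {R P} f g.
Arguments scaleE {R P} s f.
Arguments zeroE {R} P.
Arguments idE {R} n P.
Arguments compE {R} n {P} jg f g.
Arguments sigma {R} n P.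
Arguments tau {R} n P.
Arguments sigE {R} n {P} j x.
Arguments msigE {R} n {P} j y.
Arguments eqT {R P} t s.
Arguments addT {R P} t s.
Arguments subT {R P} t s.
Arguments zeroT {R} P.
Arguments oneT {R} n P.
Arguments mulT {R} n {P} ja t s.
Arguments dP {R} n {P} d.
Arguments dQ {R n P M} d alpha beta.
Arguments deltaP {R} n {P} d j g.
Arguments deltaE {R n P M} d alpha beta j f.
Arguments xiT {R n P M} d alpha beta j t.
Arguments bar {R} n {P} j g.
Arguments Delta {R n P M} d alpha beta j g.
Arguments FF {R P} t.
Arguments GG {R n P M} d alpha beta j g.
Arguments exact_resolution {R n P M} d alpha beta.

From Pilot Require Import Defs.
From HB Require Import structures.
From mathcomp Require Import all_boot all_order all_algebra.
Import GRing.Theory.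
Local Open Scope ring_scope.
From mathcomp Require Import zify ring.
From Stdlib Require Import FunctionalExtensionality.
Import Num.Theory.

(* A family f on the complex 𝒫 satisfies σ∘f = ±f∘σ exactly when it is periodic along the
   copies, f(l+1 → L+1) = ±f(l → L), and maps the 0-th copy into the 0-th copy.  The graded
   repetition ḡ is such a family, and Δ(g) = [C, ḡ] is the graded commutator of ḡ with the
   part C = β∘α of the differential of 𝒫 linking consecutive copies.  As C, and hence Δ(g),
   vanishes on the 0-th copy, Δ(g) = (Δ(g)∘τ)∘σ: this makes G a chain map, and G is
   multiplicative because g ↦ ḡ is and [C, -] is a graded derivation.  Finally F∘G = id, and
   for a cocycle (x, y) of 𝒯 the difference u = x̄₀ - x again vanishes on the 0-th copy, so
   (0, ±u∘τ) is a homotopy between G∘F and the identity. *)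

Section Signs.
Variable R : pzRingType.

Lemma odd_abszD (a b : int) : odd (absz (a + b)) = odd (absz a) (+) odd (absz b).
Proof.
have := modn2 (absz (a + b)); have := modn2 (absz a); have := modn2 (absz b).
by case: (odd (absz a)); case: (odd (absz b)); case: (odd (absz (a + b))) => /=; lia.
Qed.

Lemma sgnZ_odd (z : int) : sgnZ R z = (-1) ^+ odd (absz z).
Proof. by rewrite /sgnZ signr_odd. Qed.

Lemma sgnZ0 : sgnZ R 0 = 1. Proof. by []. Qed.

Lemma sgnZ1 : sgnZ R 1 = -1. Proof. by rewrite /sgnZ expr1. Qed.

Lemma sgnZD a b : sgnZ R (a + b) = sgnZ R a * sgnZ R b.
Proof. by rewrite !sgnZ_odd odd_abszD signr_addb. Qed.

Lemma sgnZN a : sgnZ R (- a) = sgnZ R a.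
Proof. by rewrite /sgnZ abszN. Qed.

Lemma sgnZB a b : sgnZ R (a - b) = sgnZ R a * sgnZ R b.
Proof. by rewrite sgnZD sgnZN. Qed.

Lemma sgnZM a b : sgnZ R (a * b) = (-1) ^+ (odd (absz a) && odd (absz b)).
Proof. by rewrite sgnZ_odd abszM oddM. Qed.

Lemma sgnZ_sqr a : sgnZ R a * sgnZ R a = 1.
Proof. by rewrite sgnZ_odd -signr_addb addbb. Qed.

Lemma commr_sgnZ a (x : R) : sgnZ R a * x = x * sgnZ R a.
Proof. exact/esym/commr_sign. Qed.

Lemma commN1r (x : R) : -1 * x = x * -1.
Proof. exact/esym/commrN1. Qed.

Lemma sgnZ_mul_shift (m : nat) a : sgnZ R (m%:Z * (a - m%:Z + 1)) = sgnZ R (m%:Z * a).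
Proof.
have -> : m%:Z * (a - m%:Z + 1) = m%:Z * a + m%:Z * (1 - m%:Z) by ring.
rewrite sgnZD; have -> : sgnZ R (m%:Z * (1 - m%:Z)) = 1.
  by rewrite sgnZM odd_abszD abszN absz_nat; case: (odd m).
by rewrite mulr1.
Qed.

Lemma sgnZ_mulSn (l m : nat) : sgnZ R (l.+1 * m)%N%:Z = sgnZ R m%:Z * sgnZ R (l * m)%N%:Z.
Proof. by rewrite mulSn PoszD sgnZD. Qed.

End Signs.

Section LinearMaps.
Variables (R : pzRingType) (U V W : lmodType R).

Section Laws.
Variables (f : U -> V) (lf : linear f).

Lemma linD u v : f (u + v) = f u + f v.
Proof. by have := lf 1 u v; rewrite !scale1r. Qed.

Lemma lin0 : f 0 = 0.
Proof. by apply: (addrI (f 0)); rewrite -linD !addr0. Qed.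

Lemma linZ a u : f (a *: u) = a *: f u.
Proof. by have := lf a u 0; rewrite !addr0 lin0 addr0. Qed.

End Laws.

Lemma linear0 : linear (fun _ : U => (0 : V)).
Proof. by move=> a u v; rewrite scaler0 addr0. Qed.

Lemma linear_if (b : bool) (h : U -> V) : linear h -> linear (fun u => if b then h u else 0).
Proof. by case: b => // _; exact: linear0. Qed.

Lemma linear_comp (h : U -> V) (k : V -> W) : linear h -> linear k -> linear (fun u => k (h u)).
Proof. by move=> lh lk a u v; rewrite lh lk. Qed.

Lemma linear_sgnZ (h : U -> V) z : linear h -> linear (fun u => sgnZ R z *: h u).
Proof. by move=> lh a u v; rewrite lh scalerDr !scalerA commr_sgnZ. Qed.

End LinearMaps.

Arguments lin0 {R U V f}.
Arguments linD {R U V f}.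
Arguments linZ {R U V f}.

Section Families.
Variables (R : pzRingType) (n : nat) (P : nat -> lmodType R).
Hypothesis n_gt0 : (0 < n)%N.
Implicit Types (f g h u D : FamE P) (j jf jg jh : int) (s : R).

Lemma castP_id i (x : P i) : castP i i x = x.
Proof. by rewrite /castP; case: eqP => // e; rewrite (eq_irrelevance e (erefl i)). Qed.

Lemma castP_lin i i' : linear (@castP R P i i').
Proof.
move=> a u v; rewrite /castP; case: eqP => [e|_]; last by rewrite scaler0 addr0.
by case: i' / e.
Qed.

Lemma castP0 i i' : castP i i' (0 : P i) = 0.
Proof. exact: lin0 (castP_lin i i'). Qed.

Lemma idx_divn L I : (I < n)%N -> (idx n L I %/ n)%N = L.
Proof. by move=> hI; rewrite /idx divnMDl // divn_small // addn0. Qed.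

Lemma idx_modn L I : (I < n)%N -> (idx n L I %% n)%N = I.
Proof. by move=> hI; rewrite /idx modnMDl modn_small. Qed.

Lemma idxK m : idx n (m %/ n) (m %% n) = m.
Proof. by rewrite /idx -divn_eq. Qed.

Lemma idx_inj {L I L' I'} : (I < n)%N -> (I' < n)%N ->
  idx n L I = idx n L' I' -> L = L' /\ I = I'.
Proof.
move=> hI hI' e; split; first by rewrite -(idx_divn L I hI) e idx_divn.
by rewrite -(idx_modn L I hI) e idx_modn.
Qed.

Lemma famE_ext f g : (forall l i l' i' v, f l i l' i' v = g l i l' i' v) -> f = g.
Proof.
move=> e; do 4 apply: functional_extensionality_dep => ?.
by apply: functional_extensionality => ?; apply: e.
Qed.

Lemma eqE_eq f g : Defs.eqE f g -> f = g.
Proof. exact: famE_ext. Qed.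

Definition linE f := forall l i l' i', linear (f l i l' i').
Definition maps0 f := forall l i l' i', f l i l' i' 0 = 0.
Definition suppE j f := forall l i l' i' (v : P i),
  ~~ [&& (i < n)%N, (i' < n)%N & ((idx n l' i')%:Z + j == (idx n l i)%:Z)] ->
  f l i l' i' v = 0.

Lemma linE_maps0 {f} : linE f -> maps0 f.
Proof. by move=> lf l i l' i'; apply: lin0. Qed.

Lemma inE_lin {j f} : Defs.inE n j f -> linE f. Proof. by case. Qed.
Lemma inE_supp {j f} : Defs.inE n j f -> suppE j f. Proof. by case. Qed.
Lemma inE_maps0 {j f} : Defs.inE n j f -> maps0 f.
Proof. by move/inE_lin/linE_maps0. Qed.

Section CompositionAt.
Variables (jg : int) (f g : FamE P) (l i l2 i2 : nat) (x : P i).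

Lemma compE_at {L I} : (I < n)%N -> (idx n L I)%:Z = (idx n l i)%:Z - jg ->
  compE n jg f g l i l2 i2 x = f L I l2 i2 (g l i L I x).
Proof. by move=> hI e; rewrite /compE -e /= idx_divn // idx_modn. Qed.

Lemma compE_neg : (idx n l i)%:Z - jg < 0 -> compE n jg f g l i l2 i2 x = 0.
Proof. by rewrite /compE; case: (_ - jg). Qed.

Lemma compE_split : ((idx n l i)%:Z - jg < 0) \/
  exists L I, (I < n)%N /\ (idx n L I)%:Z = (idx n l i)%:Z - jg.
Proof.
case: (_ - jg) => m; last by left.
by right; exists (m %/ n)%N, (m %% n)%N; rewrite ltn_pmod // idxK.
Qed.

End CompositionAt.

Arguments compE_at {jg f g l i l2 i2 x L I}.
Arguments compE_neg {jg f g l i l2 i2 x}.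

Lemma compEA jg jh f g h : maps0 f ->
  compE n jh (compE n jg f g) h = compE n (jg + jh) f (compE n jh g h).
Proof.
move=> f0; apply: famE_ext => l i l2 i2 x; rewrite /compE.
case E: ((idx n l i)%:Z - jh) => [m|m].
- rewrite idxK.
  have -> : (idx n l i)%:Z - (jg + jh) = m%:Z - jg by rewrite -E; ring.
  by case: (m%:Z - jg).
- by case: (_ - (jg + jh)) => m' //=; rewrite f0.
Qed.
Arguments compEA {jg jh f g h}.

Lemma compEDl jg f f' g : compE n jg (addE f f') g = addE (compE n jg f g) (compE n jg f' g).
Proof.
by apply: famE_ext => l i l2 i2 x; rewrite /compE /addE; case: (_ - _) => m //; rewrite addr0.
Qed.

Lemma compEDr jg f g g' : linE f ->
  compE n jg f (addE g g') = addE (compE n jg f g) (compE n jg f g').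
Proof.
move=> lf; apply: famE_ext => l i l2 i2 x; rewrite /compE /addE.
by case: (_ - _) => m //; rewrite ?addr0 // linD.
Qed.
Arguments compEDr {jg f g g'}.

Lemma compEZl jg s f g : compE n jg (scaleE s f) g = scaleE s (compE n jg f g).
Proof.
by apply: famE_ext => l i l2 i2 x; rewrite /compE /scaleE; case: (_ - _) => m //; rewrite scaler0.
Qed.

Lemma compEZr jg s f g : linE f -> compE n jg f (scaleE s g) = scaleE s (compE n jg f g).
Proof.
move=> lf; apply: famE_ext => l i l2 i2 x; rewrite /compE /scaleE.
by case: (_ - _) => m //; rewrite ?scaler0 // linZ.
Qed.
Arguments compEZr {jg s f g}.

Lemma compE0l jg g : compE n jg (zeroE P) g = zeroE P.
Proof. by apply: famE_ext => l i l2 i2 x; rewrite /compE; case: (_ - _). Qed.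

Lemma compE0r jg f : maps0 f -> compE n jg f (zeroE P) = zeroE P.
Proof.
by move=> f0; apply: famE_ext => l i l2 i2 x; rewrite /compE; case: (_ - _) => // m; apply: f0.
Qed.
Arguments compE0r {jg f}.

Lemma linE_comp jg f g : linE f -> linE g -> linE (compE n jg f g).
Proof.
move=> lf lg l i l2 i2 a u v; rewrite /compE; case: (_ - _) => m.
  by rewrite (lg _ _ _ _) (lf _ _ _ _).
by rewrite scaler0 addr0.
Qed.

Lemma linE_add f g : linE f -> linE g -> linE (addE f g).
Proof.
move=> lf lg l i l2 i2 a u v; rewrite /addE (lf _ _ _ _) (lg _ _ _ _).
by rewrite scalerDr addrACA.
Qed.

Lemma linE_scale s f : (forall a, s * a = a * s) -> linE f -> linE (scaleE s f).
Proof. by move=> hs lf l i l2 i2 a u v; rewrite /scaleE (lf _ _ _ _) scalerDr !scalerA hs. Qed.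

Lemma suppE_comp jf jg f g : maps0 f -> suppE jf f -> suppE jg g ->
  suppE (jf + jg) (compE n jg f g).
Proof.
move=> f0 sf sg l i l2 i2 v hn.
have [hneg|[L [I [hI e]]]] := compE_split jg l i; first by rewrite compE_neg.
rewrite (compE_at hI e).
case hi: (i < n)%N; last by rewrite sg ?hi // f0.
apply: sf; apply: contra hn => /and3P [_ h2 /eqP e2]; rewrite hi h2 /=.
by apply/eqP; rewrite addrA e2 e; ring.
Qed.

Lemma inE_comp {jf jg f g} : Defs.inE n jf f -> Defs.inE n jg g ->
  Defs.inE n (jf + jg) (compE n jg f g).
Proof.
move=> hf hg; split; first exact: linE_comp (inE_lin hf) (inE_lin hg).
exact: suppE_comp (inE_maps0 hf) (inE_supp hf) (inE_supp hg).
Qed.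

Lemma inE_add {j f g} : Defs.inE n j f -> Defs.inE n j g -> Defs.inE n j (addE f g).
Proof.
move=> hf hg; split; first exact: linE_add (inE_lin hf) (inE_lin hg).
by move=> l i l2 i2 v h; rewrite /addE (inE_supp hf) // (inE_supp hg) // addr0.
Qed.

Lemma inE_scale {j s f} : (forall a, s * a = a * s) -> Defs.inE n j f -> Defs.inE n j (scaleE s f).
Proof.
move=> hs hf; split; first exact: linE_scale hs (inE_lin hf).
by move=> l i l2 i2 v h; rewrite /scaleE (inE_supp hf) // scaler0.
Qed.

Lemma inE_zero j : Defs.inE n j (zeroE P).
Proof. by split=> // l i l2 i2 a u v; rewrite /zeroE scaler0 addr0. Qed.

Definition gcomm D j f : FamE P :=
  addE (compE n j D f) (scaleE (- sgnZ R j) (compE n 1 f D)).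

Lemma commr_NsgnZ j a : - sgnZ R j * a = a * - sgnZ R j.
Proof. by rewrite mulNr mulrN commr_sgnZ. Qed.

Lemma gcommM {D jf jg f g} : linE D -> linE f ->
  gcomm D (jf + jg) (compE n jg f g) =
  addE (compE n jg (gcomm D jf f) g) (scaleE (sgnZ R jf) (compE n (jg + 1) f (gcomm D jg g))).
Proof.
move=> lD lf; rewrite /gcomm.
rewrite compEDl compEZl (compEA (linE_maps0 lf)).
rewrite compEDr // compEZr // (compEA (linE_maps0 lf)).
rewrite -(compEA (linE_maps0 lD)) (addrC 1 jg).
apply: famE_ext => l i l2 i2 v; rewrite /addE /scaleE.
rewrite sgnZD !scalerDr !scalerA !mulrN -!addrA; congr (_ + _).
by rewrite !scaleNr addrA addNr add0r.
Qed.

Lemma gcommD {D j f g} : linE D -> gcomm D j (addE f g) = addE (gcomm D j f) (gcomm D j g).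
Proof.
move=> lD; rewrite /gcomm compEDr // compEDl.
apply: famE_ext => l i l2 i2 v; rewrite /addE /scaleE scalerDr.
by rewrite -!addrA; congr (_ + _); rewrite addrCA.
Qed.

Lemma gcommZ {D j s f} : linE D -> (forall a, s * a = a * s) ->
  gcomm D j (scaleE s f) = scaleE s (gcomm D j f).
Proof.
move=> lD hs; rewrite /gcomm compEZr // compEZl.
by apply: famE_ext => l i l2 i2 v; rewrite /addE /scaleE scalerDr !scalerA hs.
Qed.

Lemma gcomm0 {D j} : maps0 D -> gcomm D j (zeroE P) = zeroE P.
Proof.
move=> D0; rewrite /gcomm (compE0r D0) compE0l.
by apply: famE_ext => l i l2 i2 v; rewrite /addE /scaleE /zeroE scaler0 addr0.
Qed.

Lemma gcommDl {D D' j f} : linE f -> gcomm (addE D D') j f = addE (gcomm D j f) (gcomm D' j f).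
Proof.
move=> lf; rewrite /gcomm compEDl compEDr //.
apply: famE_ext => l i l2 i2 v; rewrite /addE /scaleE scalerDr.
by rewrite -!addrA; congr (_ + _); rewrite addrCA.
Qed.

Lemma gcommZl {D s j f} : linE f -> (forall a, s * a = a * s) ->
  gcomm (scaleE s D) j f = scaleE s (gcomm D j f).
Proof.
move=> lf hs; rewrite /gcomm compEZl compEZr //.
by apply: famE_ext => l i l2 i2 v; rewrite /addE /scaleE scalerDr !scalerA hs.
Qed.

Lemma gcomm_nilpotent {D j f} : linE D -> linE f -> compE n 1 D D = zeroE P ->
  gcomm D (j + 1) (gcomm D j f) = zeroE P.
Proof.
move=> lD lf DD; rewrite {1}/gcomm {2}/gcomm.
rewrite compEDr // compEZr // compEDl compEZl.
rewrite {1}(addrC j 1) -(@compEA 1 j D D f (linE_maps0 lD)) DD compE0l.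
rewrite (@compEA j 1 D f D (linE_maps0 lD)) (@compEA 1 1 f D D (linE_maps0 lf)).
rewrite DD (compE0r (linE_maps0 lf)).
apply: famE_ext => l i l2 i2 v; rewrite /addE /scaleE /zeroE scaler0 !addr0 add0r.
by rewrite sgnZD sgnZ1 mulrN1 opprK -scalerDl addNr scale0r.
Qed.

Lemma gcomm_inE {D j f} : Defs.inE n 1 D -> Defs.inE n j f -> Defs.inE n (j + 1) (gcomm D j f).
Proof.
move=> hD hf; apply: inE_add; first by rewrite addrC; apply: inE_comp.
by apply: inE_scale; [exact: commr_NsgnZ | exact: inE_comp].
Qed.

Lemma compE_into0 jg f g l i l2 i2 (v : P i) :
  (forall L I (w : P I), f L I l2 i2 w = 0) -> compE n jg f g l i l2 i2 v = 0.
Proof. by move=> h; rewrite /compE; case: (_ - _) => m. Qed.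

Lemma compE_from_ge {jg f g l i l2 i2} {v : P i} : (n <= i)%N -> suppE jg g -> maps0 f ->
  compE n jg f g l i l2 i2 v = 0.
Proof. by move=> hi sg f0; rewrite /compE; case: (_ - _) => m //; rewrite sg ?f0 // ltnNge hi. Qed.

Lemma compE_through {jg f g l i l2 i2} {v : P i} L I : suppE jg g -> maps0 f -> (I < n)%N ->
  (forall L' I' (w : P I'), (L' != L) || (I' != I) -> f L' I' l2 i2 w = 0) ->
  compE n jg f g l i l2 i2 v = f L I l2 i2 (g l i L I v).
Proof.
move=> sg f0 hI hf.
have gz : (idx n L I)%:Z + jg != (idx n l i)%:Z -> g l i L I v = 0.
  by move=> h; apply: sg; rewrite hI /= andbC (negbTE h).
have [hneg|[L' [I' [hI' e]]]] := compE_split jg l i.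
  by rewrite compE_neg // gz ?f0 //; apply: contraTneq hneg => <-; rewrite addrK.
rewrite (compE_at hI' e).
case: (boolP ((L' != L) || (I' != I))) => [hne|]; last first.
  by rewrite negb_or !negbK => /andP [/eqP -> /eqP ->].
rewrite hf // gz ?f0 //; apply/negP => /eqP e2; move: hne.
have [] : (idx n L I)%:Z = (idx n L' I')%:Z by rewrite e -e2 addrK.
by move=> /(idx_inj hI hI') [-> ->]; rewrite !eqxx.
Qed.

Lemma sigma_inE : Defs.inE n n%:Z (sigma n P).
Proof.
split=> [l i l' i'|l i l' i' v]; rewrite /sigma; first by apply: linear_if; exact: castP_lin.
case: ifP => // /and3P [/eqP -> /eqP <- hi].
by rewrite hi /= => /negP []; apply/eqP; rewrite /idx mulSn; lia.
Qed.

Lemma tau_inE : Defs.inE n (- n%:Z) (tau n P).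
Proof.
split=> [l i l' i'|l i l' i' v]; rewrite /tau; first by apply: linear_if; exact: castP_lin.
case: ifP => // /and3P [/eqP -> /eqP <- hi].
by rewrite hi /= => /negP []; apply/eqP; rewrite /idx mulSn; lia.
Qed.

Lemma idE_inE : Defs.inE n 0 (idE n P).
Proof.
split=> [l i l' i'|l i l' i' v]; rewrite /idE; first by apply: linear_if; exact: castP_lin.
by case: ifP => // /and3P [/eqP -> /eqP <- ->]; rewrite addr0 eqxx.
Qed.

Lemma compE_sigmal {jg g} : suppE jg g -> forall l i L i2 (v : P i),
  compE n jg (sigma n P) g l i L i2 v = g l i L.+1 i2 v.
Proof.
move=> sg l i L i2 v; case hi2: (i2 < n)%N; last first.
  rewrite compE_into0 ?sg ?hi2 ?andbF // => L' I' w.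
  by rewrite /sigma; case: ifP => // /and3P [_ /eqP e hI]; rewrite e hi2 in hI.
rewrite (compE_through L.+1 i2 sg (inE_maps0 sigma_inE) hi2).
  by rewrite /sigma !eqxx hi2 castP_id.
move=> L' I' w hne; rewrite /sigma; case: ifP => // /and3P [/eqP e1 e2 _].
by move: hne; rewrite e1 e2 !eqxx.
Qed.

Lemma compE_taul {jg g} : suppE jg g -> forall l i L i2 (v : P i),
  compE n jg (tau n P) g l i L i2 v = if L is L'.+1 then g l i L' i2 v else 0.
Proof.
move=> sg l i [|L] i2 v; first by rewrite compE_into0.
case hi2: (i2 < n)%N; last first.
  rewrite compE_into0 ?sg ?hi2 ?andbF // => L' I' w.
  by rewrite /tau; case: ifP => // /and3P [_ /eqP e hI]; rewrite e hi2 in hI.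
rewrite (compE_through L i2 sg (inE_maps0 tau_inE) hi2).
  by rewrite /tau !eqxx hi2 castP_id.
move=> L' I' w hne; rewrite /tau; case: ifP => // /and3P [/eqP [e1] e2 _].
by move: hne; rewrite e1 e2 !eqxx.
Qed.

Lemma compE_idl {jg g} : suppE jg g -> compE n jg (idE n P) g = g.
Proof.
move=> sg; apply: famE_ext => l i l2 i2 v; case hi2: (i2 < n)%N; last first.
  rewrite compE_into0 ?sg ?hi2 ?andbF // => L' I' w.
  by rewrite /idE; case: ifP => // /and3P [_ /eqP e hI]; rewrite e hi2 in hI.
rewrite (compE_through l2 i2 sg (inE_maps0 idE_inE) hi2).
  by rewrite /idE !eqxx hi2 castP_id.
move=> L' I' w hne; rewrite /idE; case: ifP => // /and3P [/eqP e1 e2 _].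
by move: hne; rewrite e1 e2 !eqxx.
Qed.

Lemma compE_sigmar {jf f} : Defs.inE n jf f -> forall l i l2 i2 (v : P i),
  compE n n%:Z f (sigma n P) l i l2 i2 v = if l is l'.+1 then f l' i l2 i2 v else 0.
Proof.
move=> hf l i l2 i2 v; case hi: (i < n)%N; last first.
  have hge : (n <= i)%N by rewrite leqNgt hi.
  rewrite (compE_from_ge hge (inE_supp sigma_inE) (inE_maps0 hf)).
  by case: l => // l; rewrite (inE_supp hf) // hi.
case: l => [|l]; first by rewrite compE_neg // /idx mul0n add0n subr_lt0 ltz_nat.
rewrite (@compE_at _ _ _ _ _ _ _ _ l i hi); last by rewrite /idx mulSn; lia.
by rewrite /sigma !eqxx hi castP_id.
Qed.

Lemma compE_taur {jf f} : Defs.inE n jf f -> forall l i l2 i2 (v : P i),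
  compE n (- n%:Z) f (tau n P) l i l2 i2 v = f l.+1 i l2 i2 v.
Proof.
move=> hf l i l2 i2 v; case hi: (i < n)%N; last first.
  have hge : (n <= i)%N by rewrite leqNgt hi.
  rewrite (compE_from_ge hge (inE_supp tau_inE) (inE_maps0 hf)).
  by rewrite (inE_supp hf) // hi.
rewrite (@compE_at _ _ _ _ _ _ _ _ l.+1 i hi); last by rewrite /idx mulSn; lia.
by rewrite /tau !eqxx hi castP_id.
Qed.

Lemma compE_idr {jf f} : Defs.inE n jf f -> compE n 0 f (idE n P) = f.
Proof.
move=> hf; apply: famE_ext => l i l2 i2 v; case hi: (i < n)%N; last first.
  have hge : (n <= i)%N by rewrite leqNgt hi.
  rewrite (compE_from_ge hge (inE_supp idE_inE) (inE_maps0 hf)).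
  by rewrite (inE_supp hf) // hi.
rewrite (@compE_at _ _ _ _ _ _ _ _ l i hi); last by rewrite subr0.
by rewrite /idE !eqxx hi castP_id.
Qed.

Lemma compE_sigma_tau {ju u} : Defs.inE n ju u ->
  compE n (- n%:Z) (compE n n%:Z u (sigma n P)) (tau n P) = u.
Proof.
move=> hu; apply: famE_ext => l i l2 i2 v.
by rewrite (compE_taur (inE_comp hu sigma_inE)) (compE_sigmar hu).
Qed.

Definition kills_copy0 f := forall i L i2 (v : P i), f 0%N i L i2 v = 0.

Lemma compE_tau_sigma {ju u} : Defs.inE n ju u -> kills_copy0 u ->
  compE n n%:Z (compE n (- n%:Z) u (tau n P)) (sigma n P) = u.
Proof.
move=> hu u0; apply: famE_ext => [[|l]] i l2 i2 v.
  by rewrite (compE_sigmar (inE_comp hu tau_inE)) u0.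
by rewrite (compE_sigmar (inE_comp hu tau_inE)) (compE_taur hu).
Qed.

Definition periodic s f := forall l i L i2 (v : P i),
  f l i L.+1 i2 v = if l is l'.+1 then s *: f l' i L i2 v else 0.

Definition sigma_comm j s f :=
  Defs.eqE (compE n j (sigma n P) f) (scaleE s (compE n n%:Z f (sigma n P))).

Lemma sigma_commP {j f} s : Defs.inE n j f -> sigma_comm j s f <-> periodic s f.
Proof.
move=> hf; split=> h l i L i2 v; [have := h l i L i2 v|rewrite /scaleE];
  rewrite (compE_sigmal (inE_supp hf)) /scaleE (compE_sigmar hf) ?h;
  by case: l => [|l] //; rewrite scaler0.
Qed.

Lemma sigma_comm_comp {jf jg f g} s t : Defs.inE n jf f -> Defs.inE n jg g ->
  sigma_comm jf s f -> sigma_comm jg t g -> sigma_comm (jf + jg) (s * t) (compE n jg f g).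
Proof.
move=> hf hg /eqE_eq ef /eqE_eq eg.
rewrite /sigma_comm -(compEA (inE_maps0 sigma_inE)) ef compEZl.
rewrite (compEA (inE_maps0 hf)) eg (compEZr (inE_lin hf)).
rewrite (compEA (inE_maps0 hf)) (addrC jg).
by move=> l i l2 i2 v; rewrite /scaleE scalerA.
Qed.

Lemma sigma_comm_add j s f g : sigma_comm j s f -> sigma_comm j s g -> sigma_comm j s (addE f g).
Proof.
move=> /eqE_eq ef /eqE_eq eg.
rewrite /sigma_comm (compEDr (inE_lin sigma_inE)) compEDl ef eg.
by move=> l i l2 i2 v; rewrite /scaleE /addE scalerDr.
Qed.

Lemma sigma_comm_scale j s t f : (forall a, t * a = a * t) ->
  sigma_comm j s f -> sigma_comm j s (scaleE t f).
Proof.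
move=> ht /eqE_eq ef.
rewrite /sigma_comm (compEZr (inE_lin sigma_inE)) compEZl ef.
by move=> l i l2 i2 v; rewrite /scaleE !scalerA ht.
Qed.

Lemma sigma_comm0 j s : sigma_comm j s (zeroE P).
Proof.
rewrite /sigma_comm (compE0r (inE_maps0 sigma_inE)) compE0l.
by move=> l i l2 i2 v; rewrite /scaleE scaler0.
Qed.

Lemma periodicD {s f g} : periodic s f -> periodic s g -> periodic s (addE f g).
Proof.
move=> pf pg l i L i2 v; rewrite /addE pf pg.
by case: l => [|l]; rewrite ?addr0 // scalerDr.
Qed.

Lemma periodicZ {s t f} : (forall a, t * a = a * t) -> periodic s f -> periodic s (scaleE t f).
Proof.
move=> ht pf l i L i2 v; rewrite /scaleE pf.
by case: l => [|l]; rewrite ?scaler0 // !scalerA ht.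
Qed.

Lemma gcomm_periodic D j f : Defs.inE n 1 D -> periodic (sgnZ R n%:Z) D ->
  Defs.inE n j f -> periodic (sgnZ R (n%:Z * j)) f ->
  periodic (sgnZ R (n%:Z * (j + 1))) (gcomm D j f).
Proof.
move=> hD pD hf pf; apply: (proj1 (sigma_commP _ (gcomm_inE hD hf))).
have sD := proj2 (sigma_commP _ hD) pD; have sf := proj2 (sigma_commP _ hf) pf.
have es : sgnZ R (n%:Z * (j + 1)) = sgnZ R n%:Z * sgnZ R (n%:Z * j).
  by rewrite mulrDr mulr1 sgnZD commr_sgnZ.
apply: sigma_comm_add; first by rewrite es (addrC j); exact: sigma_comm_comp.
apply: sigma_comm_scale; first exact: commr_NsgnZ.
by rewrite es commr_sgnZ; exact: sigma_comm_comp.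
Qed.

Lemma periodic_tau {ju u} s : Defs.inE n ju u -> periodic s u -> kills_copy0 u ->
  periodic s (compE n (- n%:Z) u (tau n P)).
Proof.
move=> hu pu u0 l i L i2 v; rewrite !(compE_taur hu) pu.
by case: l => [|l]; rewrite ?u0 ?scaler0 // (compE_taur hu).
Qed.

Lemma gcomm_tau_into_copy0 {D} : Defs.inE n 1 D -> periodic (sgnZ R n%:Z) D ->
  forall l i L i2 (v : P i), gcomm D (- n%:Z) (tau n P) l i L.+1 i2 v = 0.
Proof.
move=> hD pD l i L i2 v; rewrite /gcomm /addE /scaleE (compE_taur hD).
rewrite (compE_taul (inE_supp hD)) pD sgnZN.
by case: l => [|l]; rewrite ?scaler0 ?addr0 // scaleNr subrr.
Qed.

Definition stable_copy0 f := forall i L i2 (v : P i), f 0%N i L.+1 i2 v = 0.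

Lemma periodic_stable_copy0 {s f} : periodic s f -> stable_copy0 f.
Proof. by move=> pf i L i2 v; rewrite pf. Qed.

Lemma compE_kills_copy0l {jg f g} : kills_copy0 f -> stable_copy0 g -> maps0 f ->
  kills_copy0 (compE n jg f g).
Proof.
move=> kf sg f0 i L i2 v; rewrite /compE; case: (_ - _) => // m.
by case: (m %/ n)%N => [|M]; rewrite ?kf // sg f0.
Qed.

Lemma compE_kills_copy0r {jg f g} : kills_copy0 g -> maps0 f -> kills_copy0 (compE n jg f g).
Proof. by move=> kg f0 i L i2 v; rewrite /compE; case: (_ - _) => // m; rewrite kg f0. Qed.

Lemma compE_kills_copy0_into_copy0 {jg f g} : kills_copy0 f ->
  (forall l i L i2 (v : P i), g l i L.+1 i2 v = 0) -> maps0 f -> compE n jg f g = zeroE P.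
Proof.
move=> kf hg f0; apply: famE_ext => l i l2 i2 v; rewrite /compE /zeroE; case: (_ - _) => // m.
by case: (m %/ n)%N => [|M]; rewrite ?kf // hg f0.
Qed.

Definition restr0 f : FamP P := fun i i2 v => f 0%N i 0%N i2 v.

Lemma famP_ext (g h : FamP P) : (forall i i2 v, g i i2 v = h i i2 v) -> g = h.
Proof.
move=> e; do 2 apply: functional_extensionality_dep => ?.
by apply: functional_extensionality => ?; apply: e.
Qed.

Lemma restr0_comp {jg f g} : maps0 f -> suppE jg g -> stable_copy0 g ->
  restr0 (compE n jg f g) = compP jg (restr0 f) (restr0 g).
Proof.
move=> f0 sg g0; apply: famP_ext => i i2 v; rewrite /restr0 /compE /compP /idx mul0n add0n.
case: (i%:Z - jg) => // m; have [hm|hm] := ltnP m n.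
  by rewrite divn_small // modn_small.
have : (0 < m %/ n)%N by rewrite divn_gt0.
case: (m %/ n)%N => [|M] // _.
rewrite g0 f0 sg ?f0 //.
by apply/negP => /and3P [_ h _]; move: h; rewrite ltnNge hm.
Qed.

Lemma inP_lin {j} {g : FamP P} : inP n j g -> forall i i', linear (g i i').
Proof. by case. Qed.

Lemma inP_supp {j} {g : FamP P} : inP n j g -> forall i i' (v : P i),
  ~~ [&& (i < n)%N, (i' < n)%N & (i'%:Z + j == i%:Z)] -> g i i' v = 0.
Proof. by case. Qed.

Lemma linE_bar j {g : FamP P} : (forall i i', linear (g i i')) -> linE (bar n j g).
Proof.
move=> lg l i l' i'; rewrite /bar; case: (l == l'); last exact: linear0.
exact: linear_sgnZ.
Qed.

Lemma bar_inE {j} {g : FamP P} : inP n j g -> Defs.inE n j (bar n j g).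
Proof.
move=> hg; split; first exact: linE_bar (inP_lin hg).
move=> l i l' i' v hn; rewrite /bar; case: eqP => // e; subst l'.
rewrite (inP_supp hg) ?scaler0 //; apply: contra hn => /and3P [h1 h2 /eqP e].
by rewrite h1 h2 /=; apply/eqP; rewrite /idx !PoszD -e addrA.
Qed.

Lemma bar_00 j (g : FamP P) i i2 (v : P i) : bar n j g 0 i 0 i2 v = g i i2 v.
Proof. by rewrite /bar eqxx mul0n mul0r scale1r. Qed.

Lemma inP_bar j (g : FamP P) : Defs.inE n j (bar n j g) -> inP n j g.
Proof.
move=> hb; split=> [i i'|i i' v hn].
  have -> : g i i' = bar n j g 0 i 0 i' by apply: functional_extensionality => w; rewrite bar_00.
  exact: (inE_lin hb 0 i 0 i').
by rewrite -(bar_00 j); apply: (inE_supp hb); rewrite /idx !mul0n !add0n.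
Qed.

Lemma bar_periodic j (g : FamP P) : periodic (sgnZ R (n%:Z * j)) (bar n j g).
Proof.
move=> [|l] i L i2 v; rewrite /bar //= eqSS.
by case: (l == L); rewrite ?scaler0 // mulSn PoszD mulrDl sgnZD scalerA.
Qed.

Lemma barD j (g h : FamP P) : bar n j (addP g h) = addE (bar n j g) (bar n j h).
Proof.
apply: famE_ext => l i l2 i2 v; rewrite /bar /addE /addP.
by case: (l == l2); rewrite ?addr0 // scalerDr.
Qed.

Lemma barZ j s (g : FamP P) : (forall a, s * a = a * s) ->
  bar n j (scaleP s g) = scaleE s (bar n j g).
Proof.
move=> hs; apply: famE_ext => l i l2 i2 v; rewrite /bar /scaleE /scaleP.
by case: (l == l2); rewrite ?scaler0 // !scalerA hs.
Qed.

Lemma bar0 j : bar n j (zeroP P) = zeroE P.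
Proof.
apply: famE_ext => l i l2 i2 v; rewrite /bar /zeroE /zeroP.
by case: (l == l2); rewrite ?scaler0.
Qed.

Lemma bar_idFamP : bar n 0 (idFamP n P) = idE n P.
Proof.
apply: famE_ext => l i l2 i2 v; rewrite /bar /idE /idFamP mulr0 scale1r.
by case: (l == l2).
Qed.

Lemma barM {j j'} {g h : FamP P} : inP n j g -> inP n j' h ->
  bar n (j + j') (compP j' g h) = compE n j' (bar n j g) (bar n j' h).
Proof.
move=> hg hh; apply: famE_ext => l i l2 i2 v.
have [hneg|[L [I [hI e]]]] := compE_split j' l i.
  rewrite compE_neg // /bar /compP.
  have : i%:Z - j' < 0 by move: hneg; rewrite /idx; lia.
  by case: (i%:Z - j') => // m _; case: (l == l2); rewrite ?scaler0.
rewrite (compE_at hI e) /bar /compP.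
have [eL|hlL] := eqVneq l L.
  subst L.
  have -> : i%:Z - j' = I by move: e; rewrite /idx; lia.
  case: (l == l2) => //.
  by rewrite (linZ (inP_lin hg _ _)) scalerA mulrDr sgnZD.
rewrite (lin0 (inP_lin hg _ _)) scaler0 if_same; case: (l == l2) => //.
case E: (i%:Z - j') => [m|m]; last by rewrite scaler0.
rewrite (inP_supp hh) ?(lin0 (inP_lin hg _ _)) ?scaler0 //.
apply/negP => /and3P [h1 h2 /eqP e2].
have /(idx_inj h2 hI) [eL _] : idx n l m = idx n L I.
  by apply/eqP; rewrite -eqz_nat e; move: E e2; rewrite /idx; lia.
by rewrite eL eqxx in hlL.
Qed.

Lemma compE_bar_tau {j} {g : FamP P} : inP n j g ->
  compE n (- n%:Z) (bar n j g) (tau n P) =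
  scaleE (sgnZ R (n%:Z * j)) (compE n j (tau n P) (bar n j g)).
Proof.
move=> hg; apply: famE_ext => l i [|L] i2 v;
  rewrite /scaleE (compE_taur (bar_inE hg)) (compE_taul (inE_supp (bar_inE hg))) //.
  by rewrite /bar scaler0.
by rewrite bar_periodic.
Qed.

Section Resolution.
Variables (M : lmodType R) (d : forall i : nat, P i -> P i.-1).
Variables (alpha : P 0%N -> M) (beta : M -> P n.-1).
Hypothesis d_lin : forall i, (0 < i < n)%N -> linear (d i).
Hypothesis alpha_lin : linear alpha.
Hypothesis beta_lin : linear beta.
Hypothesis resolution : exact_resolution d alpha beta.

Notation dQ := (dQ d alpha beta).

Lemma d_d i (v : P i.+1) : (0 < i)%N -> (i.+1 < n)%N -> d i (d i.+1 v) = 0.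
Proof. by case: resolution => _ [_ [mid _]] h1 h2; apply/(mid i h1 h2); exists v. Qed.

Lemma alpha_d (v : P 1) : (1 < n)%N -> alpha (d 1 v) = 0.
Proof. by case: resolution => _ [_ [_ [_ [bot _]]]] h; apply/(bot h); exists v. Qed.

Lemma d_beta m : (1 < n)%N -> d n.-1 (beta m) = 0.
Proof. by case: resolution => _ [_ [_ [top _]]] h; apply/(top h); exists m. Qed.

Lemma alpha_beta m : n = 1%N -> alpha (castP n.-1 0 (beta m)) = 0.
Proof. by case: resolution => _ [_ [_ [_ [_ one]]]] h; apply/(one h); exists m. Qed.

Lemma dQ_lin : linE dQ.
Proof.
move=> l i l' i'; rewrite /Defs.dQ.
case E: [&& (0 < i)%N, (i < n)%N, l' == l & i' == i.-1].
  move/and4P: E => [h1 h2 _ _].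
  by apply/linear_sgnZ/linear_comp/castP_lin; apply: d_lin; rewrite h1 h2.
case: [&& i == 0%N, l == l'.+1 & i' == n.-1]; last exact: linear0.
apply/linear_sgnZ/linear_comp/castP_lin.
exact/linear_comp/beta_lin/linear_comp/alpha_lin/castP_lin.
Qed.

Lemma dQ_inE : Defs.inE n 1 dQ.
Proof.
split=> [|l i l' i' v]; first exact: dQ_lin.
rewrite /Defs.dQ; case: ifP => [/and4P [h1 h2 /eqP -> /eqP ->] /negP []|_].
  by rewrite h2 (leq_ltn_trans (leq_pred i) h2) /=; apply/eqP; rewrite /idx; lia.
case: ifP => // /and3P [/eqP hi /eqP -> /eqP ->] /negP [].
by rewrite hi n_gt0 ltn_predL n_gt0 /=; apply/eqP; rewrite /idx mulSn; lia.
Qed.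

Lemma dQ_periodic : periodic (sgnZ R n%:Z) dQ.
Proof.
move=> [|l] i L i2 v; rewrite /Defs.dQ; first by rewrite !andbF.
rewrite !eqSS sgnZ_mulSn; case: ifP => _; first by rewrite scalerA.
by case: ifP => _; rewrite ?scaler0 // sgnZ_mulSn scalerA.
Qed.

Lemma restr0_dQ : restr0 dQ = dP n d.
Proof.
apply: famP_ext => i i2 v; rewrite /restr0 /Defs.dQ /dP eqxx /= andbF mul0n.
by case: ifP => _; rewrite ?scale1r.
Qed.

Lemma dQ_beta l' l2 i2 m : dQ l' n.-1 l2 i2 (beta m) = 0.
Proof.
rewrite /Defs.dQ; case: ifP => [/and4P [h1 _ _ _]|_].
  have h : (1 < n)%N by rewrite -(prednK n_gt0) ltnS.
  by rewrite d_beta // castP0 scaler0.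
case: ifP => [/and3P [/eqP h0 _ _]|_] //.
have h : n = 1%N by rewrite -(prednK n_gt0) h0.
by rewrite alpha_beta // (lin0 beta_lin) castP0 scaler0.
Qed.

Lemma dQ_d l l2 i2 i (v : P i.+1) : (i.+1 < n)%N -> dQ l i l2 i2 (d i.+1 v) = 0.
Proof.
case: i v => [|i] v h; rewrite /Defs.dQ /=.
  by rewrite castP_id alpha_d // (lin0 beta_lin) castP0 scaler0; case: ifP.
by case: ifP => _ //; rewrite d_d // castP0 scaler0.
Qed.

Lemma dQ_wrap l (v : P 0) : dQ l.+1 0 l n.-1 v = sgnZ R (l * n)%N%:Z *: beta (alpha v).
Proof. by rewrite /Defs.dQ /= !eqxx /= !castP_id. Qed.

Lemma dQ_within l i (v : P i.+1) : (i.+1 < n)%N ->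
  dQ l i.+1 l i v = sgnZ R (l * n)%N%:Z *: d i.+1 v.
Proof. by move=> h; rewrite /Defs.dQ /= h !eqxx /= castP_id. Qed.

Lemma dQ_sqr : compE n 1 dQ dQ = zeroE P.
Proof.
apply: famE_ext => l i l2 i2 v; rewrite /zeroE; case hi: (i < n)%N; last first.
  have hge : (n <= i)%N by rewrite leqNgt hi.
  exact: compE_from_ge hge (inE_supp dQ_inE) (inE_maps0 dQ_inE).
case: i v hi => [|i] v hi.
  case: l => [|l]; first by rewrite compE_neg // /idx.
  rewrite (@compE_at _ _ _ _ _ _ _ _ l n.-1); first last.
  - by rewrite /idx mulSn; have := prednK n_gt0; lia.
  - by rewrite ltn_predL.
  by rewrite dQ_wrap (linZ (dQ_lin _ _ _ _)) dQ_beta scaler0.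
rewrite (@compE_at _ _ _ _ _ _ _ _ l i); first last.
- by rewrite /idx; lia.
- exact: ltnW.
by rewrite dQ_within // (linZ (dQ_lin _ _ _ _)) dQ_d // scaler0.
Qed.

Lemma deltaE_gcomm : deltaE d alpha beta = gcomm dQ.
Proof. by []. Qed.

Lemma dP_lin i i2 : linear (dP n d i i2).
Proof.
rewrite /dP; case E: [&& (0 < i)%N, (i < n)%N & i2 == i.-1]; last exact: linear0.
by move/and3P: E => [h1 h2 _]; apply/linear_comp/castP_lin; apply: d_lin; rewrite h1 h2.
Qed.

Lemma dP_inP : inP n 1 (dP n d).
Proof.
split=> [|i i' v]; first exact: dP_lin.
rewrite /dP; case: ifP => // /and3P [h1 h2 /eqP ->] /negP [].
rewrite h2 (leq_ltn_trans (leq_pred i) h2) /=.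
by apply/eqP; rewrite -(prednK h1) /=; lia.
Qed.

Lemma dP_sqr : compP 1 (dP n d) (dP n d) = zeroP P.
Proof.
apply: famP_ext => [[|i]] i2 v //; rewrite /compP /zeroP.
have -> : (i.+1)%:Z - 1 = i by lia.
rewrite {2}/dP /= eqxx andbT; case: ifP => hi; last exact: (lin0 (dP_lin _ _)).
rewrite castP_id /dP /=; case: ifP => // /and3P [h1 _ _].
by rewrite d_d // castP0.
Qed.

Definition dQdiag := bar n 1 (dP n d).
(* The C of the proof idea: the components ±β∘α of dQ from copy l+1 to copy l. *)
Definition dQoff := addE dQ (scaleE (-1) dQdiag).

Lemma dQdiag_inE : Defs.inE n 1 dQdiag.
Proof. exact: bar_inE dP_inP. Qed.

Lemma dQdiag_sqr : compE n 1 dQdiag dQdiag = zeroE P.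
Proof. by rewrite /dQdiag -(barM dP_inP dP_inP) dP_sqr bar0. Qed.

Lemma dQoff_inE : Defs.inE n 1 dQoff.
Proof. exact: inE_add dQ_inE (inE_scale (@commN1r _) dQdiag_inE). Qed.

Lemma dQoff_kills_copy0 : kills_copy0 dQoff.
Proof.
move=> i [|L] i2 v; rewrite /dQoff /addE /scaleE.
  by rewrite -[dQ 0 _ 0 _ v]/(restr0 dQ i i2 v) restr0_dQ /dQdiag bar_00 scaleN1r subrr.
by rewrite dQ_periodic /dQdiag /bar /= scaler0 addr0.
Qed.

Lemma dQoff_periodic : periodic (sgnZ R n%:Z) dQoff.
Proof.
apply: periodicD; first exact: dQ_periodic.
apply: periodicZ; first exact: commN1r.
by have := bar_periodic 1 (dP n d); rewrite mulr1.
Qed.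

Lemma bar_deltaP {j} {g : FamP P} : inP n j g ->
  bar n (j + 1) (deltaP n d j g) = gcomm dQdiag j (bar n j g).
Proof.
move=> hg; rewrite /gcomm /dQdiag -(barM dP_inP hg) -(barM hg dP_inP) (addrC 1 j).
by rewrite /deltaP barD barZ //; exact: commr_NsgnZ.
Qed.

Lemma deltaP_inP {j} {g : FamP P} : inP n j g -> inP n (j + 1) (deltaP n d j g).
Proof.
by move=> hg; apply: inP_bar; rewrite bar_deltaP //; exact: gcomm_inE dQdiag_inE (bar_inE hg).
Qed.

Lemma Delta_gcomm {j} {g : FamP P} : inP n j g ->
  Delta d alpha beta j g = gcomm dQoff j (bar n j g).
Proof.
move=> hg; have lb := linE_bar j (inP_lin hg).
by rewrite /Delta bar_deltaP // /dQoff (gcommDl lb) (gcommZl lb (@commN1r _)).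
Qed.

Lemma Delta_inE {j} {g : FamP P} : inP n j g -> Defs.inE n (j + 1) (Delta d alpha beta j g).
Proof. by move=> hg; rewrite (Delta_gcomm hg); exact: gcomm_inE dQoff_inE (bar_inE hg). Qed.

Lemma Delta_kills_copy0 {j} {g : FamP P} : inP n j g -> kills_copy0 (Delta d alpha beta j g).
Proof.
move=> hg; rewrite (Delta_gcomm hg) => i L i2 v; rewrite /gcomm /addE /scaleE.
have k1 : kills_copy0 (compE n j dQoff (bar n j g)).
  exact: compE_kills_copy0l dQoff_kills_copy0
    (periodic_stable_copy0 (bar_periodic j g)) (inE_maps0 dQoff_inE).
have k2 : kills_copy0 (compE n 1 (bar n j g) dQoff).
  exact: compE_kills_copy0r dQoff_kills_copy0 (inE_maps0 (bar_inE hg)).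
by rewrite k1 k2 scaler0 addr0.
Qed.

Lemma Delta_periodic {j} {g : FamP P} : inP n j g ->
  periodic (sgnZ R (n%:Z * (j + 1))) (Delta d alpha beta j g).
Proof.
move=> hg; rewrite (Delta_gcomm hg).
exact: gcomm_periodic dQoff_inE dQoff_periodic (bar_inE hg) (bar_periodic _ _).
Qed.

Lemma gcomm_Delta {j} {g : FamP P} : inP n j g ->
  gcomm dQ (j + 1) (Delta d alpha beta j g) =
  scaleE (-1) (Delta d alpha beta (j + 1) (deltaP n d j g)).
Proof.
move=> hg; have lb := linE_bar j (inP_lin hg).
rewrite /Delta deltaE_gcomm (bar_deltaP hg) (bar_deltaP (deltaP_inP hg)) (bar_deltaP hg).
rewrite (gcommD dQ_lin) (gcommZ dQ_lin (@commN1r _)).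
rewrite (gcomm_nilpotent dQ_lin lb dQ_sqr).
rewrite (gcomm_nilpotent (inE_lin dQdiag_inE) lb dQdiag_sqr).
by apply: famE_ext => l i l2 i2 v; rewrite /addE /scaleE /zeroE scaler0 addr0 add0r.
Qed.

Notation xiT := (xiT d alpha beta).
Notation GG := (GG d alpha beta).

Lemma F_chain_map {j} {t : FamT P} : inT n j t ->
  (forall i l' i' (v : P i), (0 < l')%N -> t.1 0%N i l' i' v = 0) /\
  inP n j (FF t) /\ eqP' (FF (xiT j t)) (deltaP n d j (FF t)).
Proof.
case: t => x y [[hx sx] [hy _]] /=.
have x0 := periodic_stable_copy0 (proj1 (sigma_commP _ hx) sx).
split; first by move=> i [|L] i2 v //; rewrite x0.
split.
  split=> [i i'|i i' v h]; first exact: (inE_lin hx 0 i 0 i').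
  by apply: (inE_supp hx); rewrite /idx !mul0n !add0n.
have e1 := restr0_comp (inE_maps0 dQ_inE) (inE_supp hx) x0.
have e2 := restr0_comp (inE_maps0 hx) (inE_supp dQ_inE) (periodic_stable_copy0 dQ_periodic).
rewrite restr0_dQ in e1 e2.
move=> i i2 v; rewrite /FF /Defs.xiT /= /addE /scaleE (compE_sigmar hy) scaler0 addr0.
by rewrite /deltaP /addP /scaleP -e1 -e2.
Qed.

Lemma G_chain_map j (g : FamP P) : inP n j g ->
  inT n j (GG j g) /\ eqT (GG (j + 1) (deltaP n d j g)) (xiT j (GG j g)).
Proof.
move=> hg; have hD := Delta_inE hg; have kD := Delta_kills_copy0 hg.
have hy : Defs.inE n (j - n%:Z + 1)
    (scaleE (sgnZ R j) (compE n (- n%:Z) (Delta d alpha beta j g) (tau n P))).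
  apply: inE_scale; first exact: commr_sgnZ.
  by rewrite (_ : j - n%:Z + 1 = (j + 1) + - n%:Z); [exact: inE_comp hD tau_inE | ring].
split.
  split; first by split; [exact: bar_inE hg | exact/(sigma_commP _ (bar_inE hg))/bar_periodic].
  split=> //; apply: (proj2 (sigma_commP _ hy)).
  rewrite (_ : j - n%:Z + 1 + 1 = (j + 1) - n%:Z + 1); last by ring.
  rewrite sgnZ_mul_shift; apply: periodicZ; first exact: commr_sgnZ.
  exact: periodic_tau hD (Delta_periodic hg) kD.
split.
  rewrite /= compEZl (compE_tau_sigma hD kD) => l i l2 i2 v.
  rewrite /Delta /addE /scaleE !scalerA mulNr sgnZ_sqr scalerDr !scaleN1r opprK.
  by rewrite addrA subrr add0r.
rewrite /= deltaE_gcomm (_ : j - n%:Z + 1 = (j + 1) + - n%:Z); last by ring.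
rewrite (gcommZ dQ_lin (@commr_sgnZ _ j)) (gcommM dQ_lin (inE_lin hD)).
rewrite (compE_kills_copy0_into_copy0 kD (gcomm_tau_into_copy0 dQ_inE dQ_periodic) (inE_maps0 hD)).
rewrite (gcomm_Delta hg) compEZl => l i l2 i2 v.
by rewrite /addE /scaleE /zeroE scaler0 addr0 scalerA sgnZD sgnZ1.
Qed.

Lemma deltaPD j (g h : FamP P) :
  deltaP n d j (addP g h) = addP (deltaP n d j g) (deltaP n d j h).
Proof.
apply: famP_ext => i i2 v; rewrite /deltaP /addP /scaleP /compP.
case: (i%:Z - j) => [m|m]; case: (i%:Z - 1) => [m'|m'];
  rewrite ?(linD (dP_lin _ _)) ?scalerDr ?scaler0 ?addr0 ?add0r //.
all: by rewrite -!addrA; congr (_ + _); rewrite addrCA.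
Qed.

Lemma deltaP0 j : deltaP n d j (zeroP P) = zeroP P.
Proof.
apply: famP_ext => i i2 v; rewrite /deltaP /addP /scaleP /compP /zeroP.
by case: (i%:Z - j) => [m|m]; case: (i%:Z - 1) => [m'|m'];
  rewrite ?(lin0 (dP_lin _ _)) ?scaler0 ?addr0.
Qed.

Lemma DeltaD j (g h : FamP P) :
  Delta d alpha beta j (addP g h) = addE (Delta d alpha beta j g) (Delta d alpha beta j h).
Proof.
rewrite /Delta deltaPD !barD deltaE_gcomm (gcommD dQ_lin).
by apply: famE_ext => l i l2 i2 v; rewrite /addE /scaleE !scalerDr addrACA.
Qed.

Lemma GGD j (g h : FamP P) : eqT (GG j (addP g h)) (addT (GG j g) (GG j h)).
Proof.
split; first by rewrite /= barD.
by rewrite /= DeltaD compEDl => l i l2 i2 v; rewrite /addE /scaleE !scalerDr.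
Qed.

Lemma FF_GG j (g : FamP P) : FF (GG j g) = g.
Proof. by apply: famP_ext => i i2 v; rewrite /FF /= bar_00. Qed.

Lemma FG_homotopic j (g : FamP P) : exists h : FamP P, inP n (j - 1) h /\
  eqP' (addP (FF (GG j g)) (scaleP (-1) g)) (deltaP n d (j - 1) h).
Proof.
exists (zeroP P); split; first by split=> // i i'; exact: linear0.
by move=> i i2 v; rewrite FF_GG deltaP0 /addP /scaleP scaleN1r subrr.
Qed.

Lemma GG_one : eqT (GG 0 (idFamP n P)) (oneT n P).
Proof.
have hid : inP n 0 (idFamP n P) by apply: inP_bar; rewrite bar_idFamP; exact: idE_inE.
split; first by rewrite /= bar_idFamP.
rewrite /= (Delta_gcomm hid) bar_idFamP /gcomm (compE_idr dQoff_inE).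
rewrite (compE_idl (inE_supp dQoff_inE)) sgnZ0.
have -> : addE dQoff (scaleE (- 1) dQoff) = zeroE P.
  by apply: famE_ext => l i l2 i2 v; rewrite /addE /scaleE scaleN1r subrr.
by rewrite compE0l => l i l2 i2 v; rewrite /scaleE scaler0.
Qed.

Lemma GGM j j' (g h : FamP P) : inP n j g -> inP n j' h ->
  eqT (GG (j + j') (compP j' g h)) (mulT n j' (GG j g) (GG j' h)).
Proof.
move=> hg hh; have hbg := bar_inE hg; have hDg := Delta_inE hg.
have hgh : inP n (j + j') (compP j' g h).
  by apply: inP_bar; rewrite (barM hg hh); exact: inE_comp hbg (bar_inE hh).
split; first by rewrite /= (barM hg hh).
rewrite /= (Delta_gcomm hgh) (barM hg hh) (gcommM (inE_lin dQoff_inE) (inE_lin hbg)).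
rewrite -(Delta_gcomm hg) -(Delta_gcomm hh) compEDl compEZl.
have eX : compE n (- n%:Z) (compE n j' (Delta d alpha beta j g) (bar n j' h)) (tau n P) =
    scaleE (sgnZ R (n%:Z * j'))
      (compE n j' (compE n (- n%:Z) (Delta d alpha beta j g) (tau n P)) (bar n j' h)).
  rewrite (compEA (inE_maps0 hDg)) (compE_bar_tau hh) (compEZr (inE_lin hDg)).
  by rewrite (compEA (inE_maps0 hDg)) (addrC j').
have eY : compE n (- n%:Z) (compE n (j' + 1) (bar n j g) (Delta d alpha beta j' h)) (tau n P) =
    compE n (j' - n%:Z + 1) (bar n j g) (compE n (- n%:Z) (Delta d alpha beta j' h) (tau n P)).
  by rewrite (compEA (inE_maps0 hbg)) (_ : j' + 1 + - n%:Z = j' - n%:Z + 1) //; ring.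
rewrite eX eY (compEZr (inE_lin hbg)) compEZl => l i l2 i2 v; rewrite /addE /scaleE.
rewrite scalerDr !scalerA addrC; congr (_ + _).
  by rewrite sgnZD commr_sgnZ -mulrA sgnZ_sqr mulr1.
by rewrite -!sgnZD (_ : j + j' + n%:Z * j' = j' * (n%:Z + 1) + j) //; ring.
Qed.

Section Homotopy.
Variables (j : int) (x y : FamE P).
Hypothesis ht : inT n j (x, y).
Hypothesis closed : Defs.eqE (xiT j (x, y)).1 (zeroE P).

Let hx : Defs.inE n j x. Proof. by case: ht => -[]. Qed.
Let hy : Defs.inE n (j - n%:Z + 1) y. Proof. by case: ht => _ []. Qed.
Let px : periodic (sgnZ R (n%:Z * j)) x.
Proof. by case: ht => -[_ sx] _; exact: (proj1 (sigma_commP _ hx)). Qed.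

Let u := addE (bar n j (restr0 x)) (scaleE (-1) x).

Lemma deltaP_restr0_closed : deltaP n d j (restr0 x) = zeroP P.
Proof.
have [_ [_ eF]] := F_chain_map ht.
by apply: famP_ext => i i2 v; rewrite -[restr0 x]/(FF (x, y)) -eF; exact: closed.
Qed.

Lemma gcomm_dQ_closed : gcomm dQ j x = scaleE (sgnZ R j) (compE n n%:Z y (sigma n P)).
Proof.
apply: famE_ext => l i l2 i2 v; have := closed l i l2 i2 v.
rewrite /= /addE /scaleE /zeroE deltaE_gcomm => /eqP; rewrite addr_eq0 => /eqP ->.
by rewrite scaleNr opprK.
Qed.

Lemma restr0_inP : inP n j (restr0 x).
Proof. by have [_ []] := F_chain_map ht. Qed.

Lemma closed_inE : Defs.inE n j u.
Proof. exact: inE_add (bar_inE restr0_inP) (inE_scale (@commN1r _) hx). Qed.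

Lemma closed_periodic : periodic (sgnZ R (n%:Z * j)) u.
Proof. exact: periodicD (bar_periodic _ _) (periodicZ (@commN1r _) px). Qed.

Lemma closed_kills_copy0 : kills_copy0 u.
Proof.
move=> i [|L] i2 v; rewrite /u /addE /scaleE.
  by rewrite bar_00 scaleN1r subrr.
by rewrite /bar /= (periodic_stable_copy0 px) scaler0 addr0.
Qed.

Let z := scaleE (sgnZ R j) (compE n (- n%:Z) u (tau n P)).

Lemma homotopy_inT : inT n (j - 1) (zeroE P, z).
Proof.
have hz : Defs.inE n (j - 1 - n%:Z + 1) z.
  apply: inE_scale; first exact: commr_sgnZ.
  by rewrite (_ : j - 1 - n%:Z + 1 = j + - n%:Z); [exact: inE_comp closed_inE tau_inE | ring].
split; first by split; [exact: inE_zero | exact: sigma_comm0].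
split=> //; apply: (proj2 (sigma_commP _ hz)).
rewrite (_ : j - 1 - n%:Z + 1 + 1 = j - n%:Z + 1); last by ring.
rewrite sgnZ_mul_shift; apply: periodicZ; first exact: commr_sgnZ.
exact: periodic_tau closed_inE closed_periodic closed_kills_copy0.
Qed.

Lemma homotopy_eq : eqT (subT (GG j (restr0 x)) (x, y)) (xiT (j - 1) (zeroE P, z)).
Proof.
split.
  rewrite /= deltaE_gcomm (gcomm0 (inE_maps0 dQ_inE)) compEZl.
  rewrite (compE_tau_sigma closed_inE closed_kills_copy0) => l i l2 i2 v.
  rewrite /addE /scaleE /zeroE add0r scalerA sgnZB sgnZ1.
  by rewrite mulrN1 opprK sgnZ_sqr scale1r.
rewrite /= deltaE_gcomm (_ : j - 1 - n%:Z + 1 = j + - n%:Z); last by ring.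
rewrite (gcommZ dQ_lin (@commr_sgnZ _ j)) (gcommM dQ_lin (inE_lin closed_inE)).
rewrite (compE_kills_copy0_into_copy0 closed_kills_copy0
  (gcomm_tau_into_copy0 dQ_inE dQ_periodic) (inE_maps0 closed_inE)).
rewrite /u (gcommD dQ_lin) (gcommZ dQ_lin (@commN1r _)) gcomm_dQ_closed.
rewrite /Delta deltaP_restr0_closed bar0 deltaE_gcomm !compEDl !compEZl compE0l.
rewrite (compE_sigma_tau hy).
move=> l i l2 i2 v; rewrite /addE /scaleE /zeroE !scaler0 !addr0 !scalerDr !scalerA.
by congr (_ + _); rewrite mulrN1 mulNr sgnZ_sqr.
Qed.

End Homotopy.

Lemma GF_homotopic {j} {t : FamT P} : inT n j t -> eqT (xiT j t) (zeroT P) ->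
  exists z : FamT P, inT n (j - 1) z /\ eqT (subT (GG j (FF t)) t) (xiT (j - 1) z).
Proof.
case: t => x y ht [closed _]; eexists; split; first exact: homotopy_inT ht.
exact: homotopy_eq ht closed.
Qed.

End Resolution.

End Families.

Theorem theorem3p6 (k : fieldType) (Gamma : algType k) (n : nat)
  (M : lmodType (Gamma^c)) (P : nat -> lmodType (Gamma^c))
  (d : forall i : nat, P i -> P i.-1) (alpha : P 0%N -> M) (beta : M -> P n.-1) :
  (0 < n)%N ->
  (forall i, (i < n)%N -> fg_projective (P i)) ->
  (forall i, (0 < i < n)%N -> linear (d i)) -> linear alpha -> linear beta ->
  exact_resolution d alpha beta ->
  (* F is a well-defined morphism of complexes T -> End(P) *)
  (forall (j : int) (t : FamT P), inT n j t ->
     (forall i l' i' (v : P i), (0 < l')%N -> t.1 0%N i l' i' v = 0) /\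
     inP n j (FF t) /\
     eqP' (FF (xiT d alpha beta j t)) (deltaP n d j (FF t))) /\
  (forall t s : FamT P, eqP' (FF (addT t s)) (addP (FF t) (FF s))) /\
  (* G is a well-defined morphism of complexes End(P) -> T *)
  (forall (j : int) (g : FamP P), inP n j g ->
     inT n j (GG d alpha beta j g) /\
     eqT (GG d alpha beta (j + 1) (deltaP n d j g)) (xiT d alpha beta j (GG d alpha beta j g))) /\
  (forall (j : int) (g h : FamP P),
     eqT (GG d alpha beta j (addP g h)) (addT (GG d alpha beta j g) (GG d alpha beta j h))) /\
  (* F and G induce mutually inverse maps on cohomology *)
  (forall (j : int) (t : FamT P), inT n j t -> eqT (xiT d alpha beta j t) (zeroT P) ->
     exists z : FamT P, inT n (j - 1) z /\
       eqT (subT (GG d alpha beta j (FF t)) t) (xiT d alpha beta (j - 1) z)) /\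
  (forall (j : int) (g : FamP P), inP n j g -> eqP' (deltaP n d j g) (zeroP P) ->
     exists h : FamP P, inP n (j - 1) h /\
       eqP' (addP (FF (GG d alpha beta j g)) (scaleP (-1) g)) (deltaP n d (j - 1) h)) /\
  (* G is a morphism of DG algebras *)
  eqT (GG d alpha beta 0 (idFamP n P)) (oneT n P) /\
  (forall (j j' : int) (g h : FamP P), inP n j g -> inP n j' h ->
     eqT (GG d alpha beta (j + j') (compP j' g h))
         (mulT n j' (GG d alpha beta j g) (GG d alpha beta j' h))).
Proof.
move=> n_gt0 _ d_lin alpha_lin beta_lin resolution.
split; first by move=> j t ht; apply: F_chain_map.
split; first by [].
split; first by move=> j g hg; apply: G_chain_map.
split; first by move=> j g h; apply: GGD.
split; first by move=> j t ht closed; apply: GF_homotopic.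
split; first by move=> j g _ _; apply: FG_homotopic.
split; first exact: GG_one.
by move=> j j' g h hg hh; apply: GGM.
Qed.
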